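(* Let $d,r$ be nonnegative integers with $1\le r\le\binom{m+d}{d}-r_d$. Then $\overline{e}_r(d,m)=\max|V(F_1,\dots,F_r)(\mathbb{F}_q)|$, where the maximum is over all sets $\{F_1,\dots,F_r\}$ of linearly independent projectively reduced homogeneous polynomials of degree $d$ in $\mathbb{F}_q[x_0,\dots,x_m]$ whose leading monomials $\mathrm{lm}(F_1),\dots,\mathrm{lm}(F_r)$ are distinct. Consequently, there is an integer $e_0$ such that $\overline{e}_r(d,m)\le A_r(d,m;e)$ for all $e\ge e_0$.
   Context: $q$ is a prime power, $\mathbb{F}_q$ the finite field with $q$ elements, $m$ a positive integer. A monomial $\mu\neq1$ in $x_0,\dots,x_m$ written $x_0^{a_0}\cdots x_k^{a_k}$ with $a_k>0$ is projectively reduced if $a_0,\dots,a_{k-1}\le q-1$; $1$ is projectively reduced; a polynomial is projectively reduced if it is an $\mathbb{F}_q$-linear combination of projectively reduced monomials. $\overline{\mathbb{M}}_e$ is the set of projectively reduced monomials of degree $e$. $r_d$ is the dimension of the degree-$d$ component of the ideal generated by $\{x_i^qx_j-x_ix_j^q:0\le i<j\le m\}$, so $|\overline{\mathbb{M}}_d|=\binom{m+d}{d}-r_d$. $V(F_1,\dots,F_r)(\mathbb{F}_q)$ is the set of points of $\mathbb{P}^m(\mathbb{F}_q)$ where all $F_i$ vanish. $\overline{e}_r(d,m)$ is the maximum of $|V(G_1,\dots,G_r)(\mathbb{F}_q)|$ over families of $r$ linearly independent projectively reduced homogeneous polynomials of degree $d$. Lexicographic order on monomials: $x_0^{b_0}\cdots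 x_m^{b_m}\prec x_0^{a_0}\cdots x_m^{a_m}$ iff at the first index where exponents differ $a_i>b_i$; $\mathrm{lm}(F)$ is the lexicographically largest monomial occurring in $F$ with nonzero coefficient. For a set $\mathcal{S}$ of monomials, $\Delta_e(\mathcal{S})=\{\mu\in\overline{\mathbb{M}}_e:\text{no }\nu\in\mathcal{S}\text{ divides }\mu\}$, and $A_r(d,m;e)=\max\{|\Delta_e(\mathcal{S})|:\mathcal{S}\subseteq\overline{\mathbb{M}}_d,|\mathcal{S}|=r\}$. *)

From HB Require Import structures.
From mathcomp Require Import all_boot all_order all_algebra.
From mathcomp Require Import mpoly.
Set Implicit Arguments.
Unset Strict Implicit.
Unset Printing Implicit Defensive.
Import GRing.Theory.
Local Open Scope ring_scope.

(* Throughout: K is a finite field, q = #|K|, and polynomials live in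
   {mpoly K[m.+1]}, i.e. in the variables x_0, ..., x_m (indexed by 'I_m.+1). *)

Section ProjRed.
Variables (K : finFieldType) (m : nat).
Local Notation n := m.+1.

Definition proj_reduced_mon (mu : 'X_{1..n}) : bool :=
  [forall i : 'I_n, forall j : 'I_n,
     ((i < j)%N && (0 < mu j)%N) ==> (mu i <= #|K|.-1)%N].

Definition proj_reduced_poly (F : {mpoly K[n]}) : bool :=
  all proj_reduced_mon (msupp F).

Definition homog_deg (d : nat) (F : {mpoly K[n]}) : bool :=
  all (fun mu => mdeg mu == d) (msupp F).

Definition lin_indep (r : nat) (F : 'I_r -> {mpoly K[n]}) : Prop :=
  forall c : 'I_r -> K, \sum_(i < r) c i *: F i = 0 -> forall i, c i = 0.

Definition lexlt (nu mu : 'X_{1..n}) : bool :=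
  [exists i : 'I_n, [forall j : 'I_n, (j < i)%N ==> (nu j == mu j)]
                     && (nu i < mu i)%N].

Definition is_lm (F : {mpoly K[n]}) (mu : 'X_{1..n}) : Prop :=
  mu \in msupp F /\ forall nu, nu \in msupp F -> nu != mu -> lexlt nu mu.

(* normalized representatives of the points of P^m(F_q): nonzero vectors
   whose first nonzero coordinate equals 1 *)
Definition proj_normalized (v : {ffun 'I_n -> K}) : bool :=
  [exists i : 'I_n, (v i == 1) && [forall j : 'I_n, (j < i)%N ==> (v j == 0)]].

Definition nzeros (r : nat) (F : 'I_r -> {mpoly K[n]}) : nat :=
  #|[set v : {ffun 'I_n -> K} | proj_normalized v &&
                                 [forall i : 'I_r, (F i).@[v] == 0]]|.

Definition admissible (d r : nat) (F : 'I_r -> {mpoly K[n]}) : Prop :=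
  lin_indep F /\ (forall i, proj_reduced_poly (F i) && homog_deg d (F i)).

Definition distinct_lm (r : nat) (F : 'I_r -> {mpoly K[n]}) : Prop :=
  forall (i j : 'I_r) (mu : 'X_{1..n}), is_lm (F i) mu -> is_lm (F j) mu -> i = j.

Definition is_max_nzeros (r : nat) (P : ('I_r -> {mpoly K[n]}) -> Prop)
    (N : nat) : Prop :=
  (exists F, P F /\ nzeros F = N) /\ (forall F, P F -> (nzeros F <= N)%N).

Definition Mbar (e : nat) : {set 'X_{1..n < e.+1}} :=
  [set mu : 'X_{1..n < e.+1} | (mdeg mu == e) && proj_reduced_mon mu].

Definition Delta (d e : nat) (S : {set 'X_{1..n < d.+1}}) : {set 'X_{1..n < e.+1}} :=
  [set mu in Mbar e | [forall nu in S, ~~ lem (bmnm nu) (bmnm mu)]].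

Definition A_r (r d e : nat) : nat :=
  \max_(S : {set 'X_{1..n < d.+1}} | (S \subset Mbar d) && (#|S| == r)) #|Delta e S|.

End ProjRed.

From HB Require Import structures.
From mathcomp Require Import all_boot all_order all_algebra.
From mathcomp Require Import mpoly finfield.
From Stdlib Require Import Classical IndefiniteDescription.
Set Implicit Arguments.
Unset Strict Implicit.
Unset Printing Implicit Defensive.
Import Order.TTheory GRing.Theory.
Local Open Scope ring_scope.

(* Subtracting from G_j the multiple of G_i that cancels a common leading
   monomial keeps a family admissible, can only enlarge its zero set and
   lowers lm(G_j); so the maximum of |V| is attained by a family G with
   distinct leading monomials S.  For e > m(q-1), every point of Z = V(G) has
   an indicator function (on normalized points) given by a form of degree e.
   On Z every monomial of degree e is a combination of monomials of
   Delta_e(S): a monomial divisible by lm(G_i) is rewritten using G_i, and a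
   factor x_i^q x_j (i < j) is replaced by x_i x_j^q, which takes the same
   values on F_q-points and is lex-smaller.  Hence the |Z| independent
   indicator functions of Z lie in a space spanned by |Delta_e(S)| functions,
   and |Z| <= |Delta_e(S)| <= A_r(d,m;e). *)

Lemma bounded_ex_max (P : nat -> Prop) (b : nat) :
  (exists k, P k) -> (forall k, P k -> (k <= b)%N) ->
  exists N, P N /\ forall k, P k -> (k <= N)%N.
Proof.
elim: b => [|b IH] exP leb.
  case: exP => k Pk; exists k; split=> // j /leb; rewrite leqn0 => /eqP->.
  exact: leq0n.
have [Pb1 | nPb1] := classic (P b.+1); first by exists b.+1.
apply: IH => // k Pk; have := leb k Pk; rewrite leq_eqVlt ltnS.
by case/orP=> // /eqP kE; rewrite kE in Pk.
Qed.

Section MonomialRank.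
Variable n : nat.
Implicit Types (mu nu : 'X_{1..n}).

Definition mnm_rank (d : nat) mu := #|[set nu : 'X_{1..n < d.+1} | (bmnm nu < mu)%O]|.

Lemma mnm_rank_lt d nu mu : (mdeg nu <= d)%N -> (nu < mu)%O ->
  (mnm_rank d nu < mnm_rank d mu)%N.
Proof.
move=> nu_d nu_mu; apply: proper_card; apply/properP; split.
  by apply/subsetP => x; rewrite !inE => /lt_trans; apply.
by exists (BMultinom (nu_d : (mdeg nu < d.+1)%N)); rewrite !inE /= ?ltxx.
Qed.

End MonomialRank.

Section LeadingMonomial.
Variables (R : fieldType) (n : nat).
Implicit Types (p q : {mpoly R[n]}).

Lemma mlead_subZ_lt p q :
  p != 0 -> mlead p = mlead q -> q - (mleadc q / mleadc p) *: p != 0 ->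
  (mlead (q - (mleadc q / mleadc p) *: p) < mlead q)%O.
Proof.
move=> p0 pq nz; rewrite lt_neqAle; apply/andP; split.
  apply: contra nz => /eqP lE; rewrite -mleadc_eq0 lE mcoeffB mcoeffZ -pq.
  by rewrite divfK ?mleadc_eq0 // pq subrr.
have /msuppB_le := mlead_supp nz; rewrite mem_cat => /orP[/msupp_le_mlead //|].
by move/msuppZ_le/msupp_le_mlead; rewrite pq.
Qed.

Lemma all_msupp_addZ (P : pred 'X_{1..n}) p q (c : R) :
  all P (msupp p) -> all P (msupp q) -> all P (msupp (p + c *: q)).
Proof.
move=> /allP Pp /allP Pq; apply/allP => nu /msuppD_le; rewrite mem_cat.
by case/orP=> [/Pp // | /msuppZ_le /Pq].
Qed.

End LeadingMonomial.

Section Lex.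
Variables (K : finFieldType) (m : nat).
Local Notation n := m.+1.
Implicit Types (F : {mpoly K[n]}) (mu nu : 'X_{1..n}).

Lemma lexltE nu mu : mdeg nu = mdeg mu -> lexlt nu mu = (nu < mu)%O.
Proof.
move=> degE; apply/existsP/ltmcP => // -[i].
  by case/andP=> /forallP eq_lt lt_i; exists i => // j /(implyP (eq_lt j)) /eqP.
move=> eq_lt lt_i; exists i; rewrite lt_i andbT.
by apply/forallP => j; apply/implyP => /eq_lt ->.
Qed.

Lemma is_lm_mlead d F mu : homog_deg d F -> is_lm F mu -> mu = mlead F.
Proof.
move=> /allP homF [mu_F mu_max]; have F0 : F != 0.
  by apply: contraTneq mu_F => ->; rewrite msupp0.
have [// | neq] := eqVneq mu (mlead F).
have := mu_max _ (mlead_supp F0); rewrite eq_sym => /(_ neq).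
rewrite lexltE ?(eqP (homF _ mu_F)) ?(eqP (homF _ (mlead_supp F0))) //.
by move/lt_geF; rewrite msupp_le_mlead.
Qed.

Lemma distinct_lm_mlead d r (G : 'I_r -> {mpoly K[n]}) :
  (forall i, homog_deg d (G i)) -> injective (fun i => mlead (G i)) -> distinct_lm G.
Proof.
move=> homG injG i j mu /(is_lm_mlead (homG i)) -> /(is_lm_mlead (homG j)).
exact: injG.
Qed.

End Lex.

Section Echelon.
Variables (K : finFieldType) (m d r : nat).
Local Notation n := m.+1.
Local Notation P := {mpoly K[n]}.
Implicit Types (F G : 'I_r -> P) (i j : 'I_r).

Lemma lin_indep_neq0 G : lin_indep G -> forall i, G i != 0.
Proof.
move=> indG i; apply/eqP => Gi0.
have sum0 : \sum_k (k == i)%:R *: G k = 0.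
  rewrite (bigD1 i) //= Gi0 scaler0 add0r big1 // => k /negbTE ->.
  exact: scale0r.
by have := indG _ sum0 i; rewrite eqxx => /eqP; rewrite oner_eq0.
Qed.

Definition addrow G i j (x : K) : 'I_r -> P :=
  fun k => if k == j then G j + x *: G i else G k.

Lemma sum_addrow G i j x (a : 'I_r -> K) :
  \sum_k a k *: addrow G i j x k = \sum_k a k *: G k + (a j * x) *: G i.
Proof.
rewrite (bigD1 j) // [X in _ = X + _](bigD1 j) //= /addrow eqxx.
rewrite (eq_bigr (fun k => a k *: G k)) => [|k /negbTE -> //].
by rewrite scalerDr scalerA addrAC.
Qed.

Lemma lin_indep_addrow G i j x :
  i != j -> lin_indep G -> lin_indep (addrow G i j x).
Proof.
move=> ij indG a sum0.
pose b k := a k + (k == i)%:R * (a j * x).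
have /indG b0 : \sum_k b k *: G k = 0.
  rewrite -[RHS]sum0 sum_addrow /b; under eq_bigr do rewrite scalerDl.
  rewrite big_split /= [X in _ + X](bigD1 i) //= eqxx mul1r.
  rewrite [X in _ + (_ + X)]big1 ?addr0 //.
  by move=> k /negbTE ->; rewrite mul0r scale0r.
have aj0 : a j = 0 by have := b0 j; rewrite /b eq_sym (negbTE ij) mul0r addr0.
by move=> k; have := b0 k; rewrite /b aj0 mul0r mulr0 addr0.
Qed.

Lemma admissible_addrow G i j x :
  i != j -> admissible d G -> admissible d (addrow G i j x).
Proof.
move=> ij [indG redG]; split; first exact: lin_indep_addrow.
move=> k; rewrite /addrow; case: eqP => // _.
case/andP: (redG i) (redG j) => red_i hom_i /andP[red_j hom_j].
by rewrite /proj_reduced_poly /homog_deg !all_msupp_addZ.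
Qed.

Lemma nzeros_addrow G i j x : (nzeros G <= nzeros (addrow G i j x))%N.
Proof.
apply/subset_leq_card/subsetP => v; rewrite !inE => /andP[-> /forallP G0] /=.
apply/forallP => k; rewrite /addrow; case: ifP => // _.
by rewrite mevalD mevalZ (eqP (G0 i)) (eqP (G0 j)) mulr0 addr0.
Qed.

Lemma echelon F : admissible d F ->
  exists G, [/\ admissible d G, injective (fun i => mlead (G i))
               & (nzeros F <= nzeros G)%N].
Proof.
suff ind k G : admissible d G -> (\sum_i mnm_rank d (mlead (G i)) < k)%N ->
    exists G', [/\ admissible d G', injective (fun i => mlead (G' i))
                 & (nzeros G <= nzeros G')%N].
  by move=> admF; apply: ind admF (ltnSn _).
elim: k G => [// | k IH] G admG rankG.
have [/injectiveP injG | /dinjectivePn[i _ [j /andP[ji _] leadE]]] :=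
  boolP (injectiveb (fun i => mlead (G i))); first by exists G.
pose G' := addrow G i j (- (mleadc (G j) / mleadc (G i))).
have admG' : admissible d G' by apply: admissible_addrow admG; rewrite eq_sym.
have G'j0 := lin_indep_neq0 admG'.1 j.
have lt_lead : (mlead (G' j) < mlead (G j))%O.
  move: G'j0; rewrite /G' /addrow eqxx scaleNr.
  exact: mlead_subZ_lt (lin_indep_neq0 admG.1 i) leadE.
have deg_lead : (mdeg (mlead (G' j)) <= d)%N.
  by have /andP[_ /allP homj] := admG'.2 j; rewrite (eqP (homj _ (mlead_supp G'j0))).
have rank_lt : (\sum_l mnm_rank d (mlead (G' l)) < \sum_l mnm_rank d (mlead (G l)))%N.
  rewrite (bigD1 j) //= [X in (_ < X)%N](bigD1 j) //=.
  rewrite (eq_bigr (fun l => mnm_rank d (mlead (G l)))) => [|l /negbTE lj].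
    by rewrite ltn_add2r mnm_rank_lt.
  by rewrite /G' /addrow lj.
have [G'' [admG'' injG'' leG'']] := IH G' admG' (leq_trans rank_lt rankG).
by exists G''; split=> //; apply: leq_trans (nzeros_addrow G i j _) leG''.
Qed.

End Echelon.

Section Span.
Variables (K : finFieldType) (m : nat).
Local Notation n := m.+1.
Local Notation P := {mpoly K[n]}.
Local Notation q := #|K|.
Local Notation point := {ffun 'I_n -> K}.

Definition mono (mu : 'X_{1..n}) (w : point) : K := ('X_[mu] : P).@[w].

Lemma mono_add mu nu w : mono (mu + nu)%MM w = mono mu w * mono nu w.
Proof. by rewrite /mono mpolyXD mevalM. Qed.

Lemma mono_mulmn_card mu w : mono (mu *+ q)%MM w = mono mu w.
Proof. by rewrite /mono -mpolyXn rmorphXn expf_card. Qed.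

Variables (e : nat) (Z : {set point}) (D : {set 'X_{1..n < e.+1}}).

Definition in_span (f : point -> K) :=
  exists c : 'X_{1..n < e.+1} -> K,
    forall w, w \in Z -> f w = \sum_(nu in D) c nu * mono nu w.

Lemma in_span_ext f g : {in Z, f =1 g} -> in_span f -> in_span g.
Proof. by move=> fg [c cE]; exists c => w wZ; rewrite -fg ?cE. Qed.

Lemma in_span_sum (T : eqType) (s : seq T) (a : T -> K) (f : T -> point -> K) :
  {in s, forall x, in_span (f x)} -> in_span (fun w => \sum_(x <- s) a x * f x w).
Proof.
elim: s => [|x s IH] span_f.
  by exists (fun=> 0) => w _; rewrite big_nil big1 // => nu _; rewrite mul0r.
have [c cE] := span_f x (mem_head x s).
have [c' c'E] : in_span (fun w => \sum_(y <- s) a y * f y w).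
  by apply: IH => y ys; apply: span_f; rewrite inE ys orbT.
exists (fun nu => a x * c nu + c' nu) => w wZ.
rewrite big_cons cE // c'E // mulr_sumr -big_split; apply: eq_bigr => nu _.
by rewrite mulrDl mulrA.
Qed.

Variables (d r : nat) (G : 'I_r -> P).
Hypothesis homG : forall i, homog_deg d (G i).
Hypothesis G_neq0 : forall i, G i != 0.
Hypothesis G_vanish : forall i, {in Z, forall w : point, (G i).@[w] = 0}.
Hypothesis D_complete : forall mu : 'X_{1..n < e.+1}, mdeg mu = e ->
  proj_reduced_mon K mu -> (forall i, ~~ lem (mlead (G i)) mu) -> mu \in D.

Section Reduction.
Variable mu : 'X_{1..n}.
Hypothesis deg_mu : mdeg mu = e.
Hypothesis span_lt : forall nu, mdeg nu = e -> (nu < mu)%O -> in_span (mono nu).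

Lemma in_span_mono_divisible i : lem (mlead (G i)) mu -> in_span (mono mu).
Proof.
set lam := mlead (G i) => lam_mu; set rho := (mu - lam)%MM.
have muE : mu = (rho + lam)%MM by rewrite submK.
have deg_supp nu : nu \in msupp (G i) -> mdeg nu = d.
  by move=> nu_supp; apply/eqP; move/allP: (homG i); apply.
have lam_supp : lam \in msupp (G i) := mlead_supp (G_neq0 i).
have lamc_neq0 : mleadc (G i) != 0 by rewrite mleadc_eq0.
pose coef nu := - ((G i)@_nu / mleadc (G i)).
apply: (@in_span_ext (fun w => \sum_(nu <- [seq nu <- msupp (G i) | nu != lam])
                                 coef nu * mono (rho + nu)%MM w)).
  (* x^rho * G_i vanishes on Z; solve for its leading term x^mu. *)
  move=> w wZ; have : ('X_[rho] * G i).@[w] = 0 by rewrite mevalM G_vanish ?mulr0.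
  rewrite {1}(mpolyE (G i)) mulr_sumr rmorph_sum (bigD1_seq lam) ?msupp_uniq //=.
  under eq_bigr do rewrite -scalerAr -mpolyXD mevalZ.
  rewrite -scalerAr -mpolyXD mevalZ -muE => /eqP; rewrite addr_eq0 => /eqP lamE.
  rewrite -[RHS](mulKf lamc_neq0) -/(mono mu w) lamE big_filter mulrN mulr_sumr.
  rewrite -sumrN; apply: eq_bigr => nu _.
  by rewrite /coef mulNr mulrAC mulrC.
apply: in_span_sum => nu; rewrite mem_filter => /andP[nu_lam nu_supp].
apply: span_lt.
  by rewrite mdegD (deg_supp _ nu_supp) -(deg_supp _ lam_supp) -mdegD -muE.
by rewrite [X in (_ < X)%O]muE ltmc_add2r lt_neqAle nu_lam msupp_le_mlead.
Qed.

Lemma in_span_mono_unreduced : ~~ proj_reduced_mon K mu -> in_span (mono mu).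
Proof.
rewrite negb_forall => /existsP[i]; rewrite negb_forall => /existsP[j].
rewrite negb_imply -ltnNge => /andP[/andP[ij mu_j] mu_i].
have ji : (j == i) = false by apply/negbTE; rewrite neq_ltn ij orbT.
pose sig := (U_(i) *+ q + U_(j))%MM.
pose sig' := (U_(i) + U_(j) *+ q)%MM.
have sig_mu : (sig <= mu)%MM.
  apply/mnm_lepP => l; rewrite /sig mnmDE mulmnE !mnm1E.
  have [<-|il] := eqVneq i l.
    by rewrite ji mul1n addn0 (leq_trans (leqSpred _) mu_i).
  by rewrite mul0n add0n; case: eqP => // <-.
set rho := (mu - sig)%MM.
have muE : mu = (rho + sig)%MM by rewrite submK.
have deg_sig : mdeg sig' = mdeg sig by rewrite !mdegD !mdegMn !mdeg1 addnC.
have lt_sig : (sig' < sig)%O.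
  apply/ltmcP => //.
  exists i => [l li|]; rewrite !mnmDE !mulmnE !mnm1E.
    have [/negbTE -> /negbTE -> //] : i != l /\ j != l.
    by rewrite !neq_ltn li (ltn_trans li ij) !orbT.
  by rewrite eqxx ji mul0n mul1n !addn0 finNzRing_gt1.
apply: (@in_span_ext (mono (rho + sig')%MM)).
  by move=> w _; rewrite muE !mono_add !mono_mulmn_card mulrA mulrAC -mulrA.
apply: span_lt; first by rewrite mdegD deg_sig -mdegD -muE.
by rewrite [X in (_ < X)%O]muE ltmc_add2r.
Qed.

End Reduction.

Lemma in_span_mono mu : mdeg mu = e -> in_span (mono mu).
Proof.
elim/(ltmwf (n := n)): mu => mu IH deg_mu.
have span_lt nu : mdeg nu = e -> (nu < mu)%O -> in_span (mono nu).
  by move=> deg_nu /IH; apply.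
have [/existsP[i i_mu] | ndiv] := boolP [exists i, lem (mlead (G i)) mu].
  exact: (in_span_mono_divisible deg_mu span_lt i_mu).
have [red | ] := boolP (proj_reduced_mon K mu); last first.
  exact: (in_span_mono_unreduced deg_mu span_lt).
have mu_bounded : (mdeg mu < e.+1)%N by rewrite deg_mu.
pose b := BMultinom mu_bounded.
have bD : b \in D.
  apply: D_complete => // i; apply: contraNN ndiv => i_mu.
  by apply/existsP; exists i.
exists (fun nu => (nu == b)%:R) => w _.
rewrite (bigD1 b) //= eqxx mul1r big1 ?addr0 // => nu /andP[_ /negbTE ->].
exact: mul0r.
Qed.

End Span.

Lemma card_le_indicator_span (R : fieldType) (V B : finType) (Z : {set V})
    (D : {set B}) (f : B -> V -> R) :
  (forall p, p \in Z -> exists c : B -> R,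
     forall w, w \in Z -> (w == p)%:R = \sum_(b in D) c b * f b w) ->
  (#|Z| <= #|D|)%N.
Proof.
move=> span_Z.
have [c cE] : exists c : V -> B -> R, forall p, p \in Z ->
    forall w, w \in Z -> (w == p)%:R = \sum_(b in D) c p b * f b w.
  apply: (functional_choice (fun p (c : B -> R) => p \in Z ->
    forall w, w \in Z -> (w == p)%:R = \sum_(b in D) c b * f b w)) => p.
  by have [/span_Z[c cE] | _] := boolP (p \in Z); [exists c | exists (fun=> 0)].
(* The identity matrix of size #|Z| factors through #|D| columns. *)
pose A : 'M[R]_(#|Z|, #|D|) := \matrix_(i, j) c (enum_val i) (enum_val j).
pose M : 'M[R]_(#|D|, #|Z|) := \matrix_(j, i) f (enum_val j) (enum_val i).
have AM : A *m M = 1%:M.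
  apply/matrixP => i i'; rewrite !mxE eq_sym -(inj_eq enum_val_inj).
  rewrite (cE _ (enum_valP i) _ (enum_valP i')) [RHS]big_enum_val.
  by apply: eq_bigr => j _; rewrite !mxE.
by have := mxrankM_maxl A M; rewrite AM mxrank1 => /leq_trans; apply; apply: rank_leq_col.
Qed.

Section Indicator.
Variables (K : finFieldType) (m : nat).
Local Notation n := m.+1.
Local Notation P := {mpoly K[n]}.
Local Notation q := #|K|.
Local Notation point := {ffun 'I_n -> K}.

Lemma expf_card_pred (x : K) : x != 0 -> x ^+ q.-1 = 1.
Proof.
move=> x0; apply: (mulfI x0); rewrite mulr1 -exprS prednK ?expf_card //.
exact: ltnW (finNzRing_gt1 K).
Qed.

Lemma subr_expf_card_pred (x y : K) : x != 0 -> x ^+ q.-1 - y ^+ q.-1 = (y == 0)%:R.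
Proof.
move=> x0; rewrite expf_card_pred //; have [-> | y0] := eqVneq y 0.
  by rewrite expr0n -subn1 subn_eq0 leqNgt finNzRing_gt1 subr0.
by rewrite expf_card_pred // subrr.
Qed.

Lemma proj_normalized_scale (v : point) (c : K) :
  proj_normalized v -> proj_normalized [ffun i => c * v i] -> c = 1.
Proof.
move=> /existsP[k /andP[/eqP vk /forallP v_lt]].
move=> /existsP[k' /andP[/eqP cvk' /forallP cv_lt]]; rewrite ffunE in cvk'.
have [lt | lt | /val_inj eqk] := ltngtP k k'.
- have /implyP/(_ lt) := cv_lt k; rewrite ffunE vk mulr1 => /eqP c0.
  by move: cvk'; rewrite c0 mul0r => /esym/eqP; rewrite oner_eq0.
- have /implyP/(_ lt)/eqP vk'0 := v_lt k'.
  by move: cvk'; rewrite vk'0 mulr0 => /esym/eqP; rewrite oner_eq0.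
- by move: cvk'; rewrite -eqk vk mulr1.
Qed.

Lemma indicator_form (p : point) (e : nat) :
  proj_normalized p -> (m * q.-1 < e)%N ->
  exists f : P, homog_deg e f /\
    forall w, proj_normalized w -> f.@[w] = (w == p)%:R.
Proof.
move=> p_norm lt_e; have /existsP[k /andP[/eqP pk _]] := p_norm.
(* At a normalized w with w k != 0 the j-th factor of the product evaluates
   to [w j == p j * w k], by Fermat's little theorem. *)
pose g j : P := 'X_k ^+ q.-1 - ('X_j - p j *: 'X_k) ^+ q.-1.
pose f := 'X_k ^+ (e - m * q.-1) * \prod_(j | j != k) g j.
exists f; split.
  have X1 l : ('X_l : P) \is 1.-homog by rewrite dhomogX /= mdeg1.
  have homg j : g j \is q.-1.-homog.
    by rewrite -[q.-1]mul1n; apply: rpredB; apply: dhomogMn; rewrite ?rpredB ?rpredZ.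
  have homprod : \prod_(j | j != k) g j \is (m * q.-1).-homog.
    have -> : (m * q.-1 = \sum_(j | j != k) q.-1)%N.
      by rewrite sum_nat_const cardC1 card_ord.
    apply: (big_ind2 (fun (a : P) t => a \is t.-homog)) => [|a s b t ha hb|j _] //.
    - exact: dhomog1.
    - exact: dhomogM.
  rewrite -[e](subnK (ltnW lt_e)) -[(e - _)%N]mul1n.
  by apply: dhomogM => //; apply: dhomogMn.
move=> w w_norm; rewrite mevalM rmorphXn /= mevalXU rmorph_prod /=.
have [wk0 | wk_neq0] := eqVneq (w k) 0.
  have w_neq_p : w != p.
    by apply/eqP => wp; move: wk0; rewrite wp pk => /eqP; rewrite oner_eq0.
  by rewrite wk0 expr0n subn_eq0 leqNgt lt_e mul0r (negbTE w_neq_p).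
under eq_bigr do
  rewrite mevalB !rmorphXn /= mevalB mevalZ !mevalXU subr_expf_card_pred //.
have [-> | w_neq_p] := eqVneq w p.
  by rewrite pk expr1n mul1r big1 // => j _; rewrite mulr1 subrr eqxx.
have /exists_inP[j jk wj] : [exists j in [pred j | j != k], w j - p j * w k != 0].
  apply: contraNT w_neq_p => /exists_inPn wE.
  have w_scale : w = [ffun j => w k * p j].
    apply/ffunP => j; rewrite ffunE.
    have [-> | jk] := eqVneq j k; first by rewrite pk mulr1.
    by have := wE j jk; rewrite negbK subr_eq0 mulrC => /eqP.
  have wk1 : w k = 1 by apply: (proj_normalized_scale p_norm); rewrite -w_scale.
  by rewrite w_scale wk1; apply/eqP/ffunP => j; rewrite ffunE mul1r.
by rewrite (bigD1 j) //= (negbTE wj) mul0r mulr0.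
Qed.

End Indicator.

Section Bound.
Variables (K : finFieldType) (m d r : nat).
Local Notation n := m.+1.
Local Notation P := {mpoly K[n]}.
Local Notation q := #|K|.

Lemma nzeros_le_card_Delta e (G : 'I_r -> P) (S : {set 'X_{1..n < d.+1}}) :
  (forall i, homog_deg d (G i)) -> (forall i, G i != 0) -> (m * q.-1 < e)%N ->
  (forall nu, nu \in S -> exists i, bmnm nu = mlead (G i)) ->
  (nzeros G <= #|Delta K e S|)%N.
Proof.
move=> homG G_neq0 lt_e S_lead.
rewrite /nzeros; set Z := [set v | _].
apply: (card_le_indicator_span (f := fun nu w => mono (bmnm nu) w)) => p pZ.
have Z_norm w : w \in Z -> proj_normalized w by rewrite inE => /andP[].
have [f [homf fE]] := indicator_form (Z_norm _ pZ) lt_e.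
suff [c cE] : in_span Z (Delta K e S) (fun w => f.@[w]).
  by exists c => w wZ; rewrite -fE ?Z_norm ?cE.
apply: (in_span_ext (f := fun w => \sum_(mu <- msupp f) f@_mu * mono mu w)).
  move=> w _; rewrite [in RHS](mpolyE f) rmorph_sum.
  by apply: eq_bigr => mu _; rewrite /= mevalZ.
apply: in_span_sum => mu mu_supp.
apply: (in_span_mono homG G_neq0).
- by move=> i w; rewrite inE => /andP[_ /forallP /(_ i) /eqP].
- move=> nu deg_nu red_nu ndiv; rewrite !inE deg_nu eqxx red_nu /=.
  by apply/forall_inP => x /S_lead[i ->].
- by apply/eqP; move/allP: homf; apply.
Qed.

Lemma nzeros_le_A_r e (G : 'I_r -> P) :
  admissible d G -> injective (fun i => mlead (G i)) -> (m * q.-1 < e)%N ->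
  (nzeros G <= A_r K m r d e)%N.
Proof.
move=> [indG redG] injG lt_e.
have homG i : homog_deg d (G i) by case/andP: (redG i).
have lead_supp i := mlead_supp (lin_indep_neq0 indG i).
have deg_lead i : mdeg (mlead (G i)) = d by apply/eqP; move/allP: (homG i); apply.
pose lead i : 'X_{1..n < d.+1} := insubd bm0 (mlead (G i)).
have leadK i : bmnm (lead i) = mlead (G i).
  by apply: insubdK; rewrite /= unfold_in deg_lead.
pose S := [set lead i | i : 'I_r].
have card_S : #|S| = r.
  rewrite card_imset ?card_ord // => i j /(congr1 (@bmnm _ _)).
  by rewrite !leadK; apply: injG.
have S_Mbar : S \subset Mbar K m d.
  apply/subsetP => _ /imsetP[i _ ->]; rewrite inE leadK deg_lead eqxx /=.
  by case/andP: (redG i) => /allP red _; apply: red.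
apply: leq_trans (nzeros_le_card_Delta (S := S) homG (lin_indep_neq0 indG) lt_e _) _.
  by move=> _ /imsetP[i _ ->]; exists i; rewrite leadK.
by apply: (leq_bigmax_cond (F := fun S => #|Delta K e S|)); rewrite S_Mbar card_S eqxx.
Qed.

Lemma lin_indep_mpolyX (mu : 'I_r -> 'X_{1..n}) :
  injective mu -> lin_indep (fun i => 'X_[mu i] : P).
Proof.
move=> mu_inj c sum0 i; have := congr1 (mcoeff (mu i)) sum0.
rewrite raddf_sum mcoeff0 (bigD1 i) //= mcoeffZ mcoeffX eqxx mulr1 big1 ?addr0 //.
by move=> j ji; rewrite mcoeffZ mcoeffX (inj_eq mu_inj) (negbTE ji) mulr0.
Qed.

Lemma admissible_exists : (r <= #|Mbar K m d|)%N -> exists F : 'I_r -> P, admissible d F.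
Proof.
move=> r_le; pose mu i := bmnm (enum_val (widen_ord r_le i)).
have mu_inj : injective mu.
  by move=> i j /val_inj/enum_val_inj/(congr1 val) /= /val_inj.
exists (fun i => 'X_[mu i]); split; first exact: lin_indep_mpolyX.
move=> i; rewrite /proj_reduced_poly /homog_deg msuppX /= !andbT.
by have := enum_valP (widen_ord r_le i); rewrite inE => /andP[-> ->].
Qed.

Lemma ex_max_nzeros (Pr : ('I_r -> P) -> Prop) :
  (exists F, Pr F) -> exists N, is_max_nzeros Pr N.
Proof.
case=> F PrF; case: (@bounded_ex_max (fun N => exists F, Pr F /\ nzeros F = N)
                                     #|{ffun 'I_n -> K}|).
- by exists (nzeros F), F.
- by move=> _ [F' [_ <-]]; apply: max_card.
- by move=> N [exN maxN]; exists N; split=> // F' PrF'; apply: maxN; exists F'.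
Qed.

End Bound.

Theorem lemma5p6 (K : finFieldType) (m d r : nat) :
  (0 < m)%N -> (1 <= r)%N -> (r <= #|Mbar K m d|)%N ->
  exists N : nat,
    is_max_nzeros (fun F : 'I_r -> {mpoly K[m.+1]} => admissible d F) N /\
    is_max_nzeros (fun F : 'I_r -> {mpoly K[m.+1]} => admissible d F /\ distinct_lm F) N /\
    exists e0 : nat, forall e : nat, (e0 <= e)%N -> (N <= A_r K m r d e)%N.
Proof.
move=> _ _ r_le.
have [N maxN] := ex_max_nzeros (admissible_exists r_le).
have [[F [admF FN]] le_max] := maxN.
have [G [admG injG leFG]] := echelon admF.
have GN : nzeros G = N by apply/eqP; rewrite eqn_leq le_max // -FN.
have homG i : homog_deg d (G i) by case/andP: (admG.2 i).
exists N; split=> //; split.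
  split; last by move=> F' [admF' _]; apply: le_max admF'.
  by exists G; split=> //; split=> //; apply: distinct_lm_mlead homG injG.
by exists (m * #|K|.-1).+1 => e lt_e; rewrite -GN; apply: nzeros_le_A_r.
Qed.
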